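(* For every integer $n \geq 0$, $$\int_0^{\pi/2} x\cos^{2n}x\,dx = \frac{\binom{2n}{n}}{2^{2n+2}}\left(\frac{\pi^{2}}{2} - \sum_{k=1}^{n}\frac{2^{2k}}{k^{2}\binom{2k}{k}}\right),$$ and $$\int_0^{\pi/2} x\cos^{2n+1}x\,dx = \frac{2^{2n}}{(2n+1)\binom{2n}{n}}\left(\frac{\pi}{2} - \sum_{k=0}^{n}\frac{\binom{2k}{k}}{2^{2k}(2k+1)}\right).$$
   Context: An empty sum is $0$. *)

From Stdlib Require Export Reals.
Open Scope R_scope.

(* sumR m n g = g m + g (m+1) + ... + g n  (empty sum = 0 when n < m);
   implemented as sum over j < n+1-m of g (m + j). *)
Fixpoint sumR_aux (m len : nat) (g : nat -> R) : R :=
  match len with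
  | O => 0
  | S l => sumR_aux m l g + g (m + l)%nat
  end.

Definition sumR (m n : nat) (g : nat -> R) : R := sumR_aux m (S n - m) g.

Definition cbin (k : nat) : R := Binomial.C (2 * k) k.

From Stdlib Require Import Reals Lra Lia.
Open Scope R_scope.

(* Write I m for the integral of x * cos x ^ m over [0, pi/2].
   Integrating by parts twice (equivalently: differentiating an explicit
   antiderivative) gives the Wallis-type reduction formula
       (m+2) * I (m+2) = (m+1) * I m - 1/(m+2),
   with I 0 = pi^2/8 and I 1 = pi/2 - 1.  The two closed forms of the
   theorem then follow by induction on n, using the ratio
   C(2n+2, n+1) = C(2n, n) * 2(2n+1)/(n+1) of central binomial coefficients. *)

(* Differentiation rules in pointwise form: Stdlib states them for the
   lifted operations on [R -> R], which do not unify with lambda terms. *)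
Lemma derivable_pt_lim_ext f g x l1 l2 :
  (forall y, f y = g y) -> l1 = l2 ->
  derivable_pt_lim f x l1 -> derivable_pt_lim g x l2.
Proof.
  intros Hfg <- Hf eps Heps; destruct (Hf eps Heps) as [del Hdel]; exists del.
  intros h Hh0 Hh; rewrite <- !Hfg; apply Hdel; assumption.
Qed.

Lemma dmult f g x a b : derivable_pt_lim f x a -> derivable_pt_lim g x b ->
  derivable_pt_lim (fun y => f y * g y) x (a * g x + f x * b).
Proof. intros; apply (derivable_pt_lim_mult f g); assumption. Qed.

Lemma dplus f g x a b : derivable_pt_lim f x a -> derivable_pt_lim g x b ->
  derivable_pt_lim (fun y => f y + g y) x (a + b).
Proof. intros; apply (derivable_pt_lim_plus f g); assumption. Qed.

Lemma dscal f c x a : derivable_pt_lim f x a ->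
  derivable_pt_lim (fun y => c * f y) x (c * a).
Proof. intros; apply (derivable_pt_lim_scal f c); assumption. Qed.

Lemma dcos_pow k x :
  derivable_pt_lim (fun y => cos y ^ k) x (INR k * cos x ^ pred k * - sin x).
Proof.
  apply (derivable_pt_lim_comp cos (fun u => u ^ k)).
  - apply derivable_pt_lim_cos.
  - apply derivable_pt_lim_pow.
Qed.

(* Reduction step: from an antiderivative F of x cos^m x one obtains an
   antiderivative of x cos^(m+2) x, since
   d/dx [x cos^(m+1) x sin x] = cos^(m+1) x sin x + x cos^(m+2) x
                                - (m+1) x cos^m x sin^2 x,
   and sin^2 = 1 - cos^2. *)
Lemma antideriv_step (F : R -> R) (m : nat) :
  (forall x, derivable_pt_lim F x (x * cos x ^ m)) ->
  forall x, derivable_pt_lim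
    (fun y => / INR (S (S m)) *
       (y * cos y ^ S m * sin y + / INR (S (S m)) * cos y ^ S (S m)
        + INR (S m) * F y))
    x (x * cos x ^ S (S m)).
Proof.
  intros HF x.
  eapply derivable_pt_lim_ext; [intro y; reflexivity| |].
  2:{ apply dscal, dplus; [apply dplus|].
      - apply dmult; [apply dmult|].
        + apply derivable_pt_lim_id.
        + apply dcos_pow.
        + apply derivable_pt_lim_sin.
      - apply dscal, dcos_pow.
      - apply dscal, HF. }
  unfold id; simpl pred.
  assert (Hsin2 : sin x ^ 2 = 1 - cos x ^ 2)
    by (rewrite <- (sin2_cos2 x); unfold Rsqr; ring).
  assert (Hm : INR (S (S m)) = INR m + 2) by (rewrite !S_INR; ring).
  assert (Hm0 : INR m + 2 <> 0) by (pose proof (pos_INR m); lra).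
  rewrite Hm, S_INR.
  field_simplify; [|exact Hm0].
  rewrite Hsin2; simpl; field; exact Hm0.
Qed.

Fixpoint antideriv (m : nat) (x : R) {struct m} : R :=
  match m with
  | O => x ^ 2 / 2
  | S O => x * sin x + cos x
  | S (S k as m1) => / INR (S m1) *
      (x * cos x ^ m1 * sin x + / INR (S m1) * cos x ^ (S m1)
       + INR m1 * antideriv k x)
  end.

Lemma antideriv_correct_pair m :
  (forall x, derivable_pt_lim (antideriv m) x (x * cos x ^ m)) /\
  (forall x, derivable_pt_lim (antideriv (S m)) x (x * cos x ^ S m)).
Proof.
  induction m as [|m [IHm IHSm]]; split; intro x.
  - eapply derivable_pt_lim_ext with (f := fun y => / 2 * y ^ 2).
    3: apply dscal, derivable_pt_lim_pow.
    + intro y; simpl; field.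
    + simpl; field.
  - eapply derivable_pt_lim_ext; [intro y; reflexivity| |].
    2:{ apply dplus; [apply dmult|].
        - apply derivable_pt_lim_id.
        - apply derivable_pt_lim_sin.
        - apply derivable_pt_lim_cos. }
    unfold id; simpl; ring.
  - apply IHSm.
  - apply (antideriv_step (antideriv m) m IHm).
Qed.

Lemma RiemannInt_antiderivative f F a b (Hab : a <= b)
  (Hcont : forall x, a <= x <= b -> continuity_pt f x)
  (HF : forall x, derivable_pt_lim F x (f x))
  (pr : Riemann_integrable f a b) : RiemannInt pr = F b - F a.
Proof.
  rewrite (RiemannInt_P20 Hab (FTC_P1 Hab Hcont) pr).
  assert (Hprim := RiemannInt_P29 Hab Hcont).
  assert (HantiF : antiderivative f F a b).
  { split; [|exact Hab]. intros x _. exists (exist _ (f x) (HF x)).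
    symmetry; apply derive_pt_eq_0, HF. }
  destruct (antiderivative_Ucte f _ _ _ _ Hprim HantiF) as [c Hc].
  rewrite !Hc; [ring | lra | lra].
Qed.

Definition I m := antideriv m (PI / 2) - antideriv m 0.

Lemma I_integral m :
  exists pr : Riemann_integrable (fun x => x * cos x ^ m) 0 (PI / 2),
    RiemannInt pr = I m.
Proof.
  assert (Hpi : 0 <= PI / 2) by (pose proof PI_RGT_0; lra).
  assert (Hcont : forall x, 0 <= x <= PI / 2 ->
                    continuity_pt (fun x => x * cos x ^ m) x).
  { intros x _. assert (continuity (fun x => x * cos x ^ m)) by reg. auto. }
  exists (continuity_implies_RiemannInt Hpi Hcont).
  apply RiemannInt_antiderivative; auto.
  intro x; apply antideriv_correct_pair.
Qed.

Lemma I_0 : I 0 = PI ^ 2 / 8.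
Proof. unfold I; simpl; field. Qed.

Lemma I_1 : I 1 = PI / 2 - 1.
Proof. unfold I; simpl. rewrite sin_PI2, cos_PI2, sin_0, cos_0. ring. Qed.

Lemma I_SS m :
  I (S (S m)) = / INR (S (S m)) * (INR (S m) * I m - / INR (S (S m))).
Proof.
  unfold I; cbn [antideriv]. rewrite sin_PI2, cos_PI2, sin_0, cos_0.
  rewrite !pow1, !pow_i by lia. ring.
Qed.

Lemma sumR_S m n g : (m <= S n)%nat -> sumR m (S n) g = sumR m n g + g (S n).
Proof.
  intro Hmn; unfold sumR.
  replace (S (S n) - m)%nat with (S (S n - m)) by lia.
  cbn [sumR_aux]; f_equal; f_equal; lia.
Qed.

Lemma cbin_pos k : 0 < cbin k.
Proof.
  unfold cbin, Binomial.C. apply Rdiv_lt_0_compat.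
  - apply INR_fact_lt_0.
  - apply Rmult_lt_0_compat; apply INR_fact_lt_0.
Qed.

Lemma cbin_0 : cbin 0 = 1.
Proof. unfold cbin, Binomial.C; simpl; field. Qed.

Lemma cbin_S n : cbin (S n) = cbin n * (2 * (2 * INR n + 1)) / (INR n + 1).
Proof.
  unfold cbin, Binomial.C.
  replace (2 * S n - S n)%nat with (S n) by lia.
  replace (2 * n - n)%nat with n by lia.
  replace (2 * S n)%nat with (S (S (2 * n))) by lia.
  rewrite !fact_simpl, !mult_INR, !S_INR, mult_INR.
  pose proof (INR_fact_neq_0 n). pose proof (INR_fact_neq_0 (2 * n)).
  pose proof (pos_INR n). simpl (INR 2).
  field. repeat split; auto; lra.
Qed.

Lemma I_even n : I (2 * n) =
  cbin n / 2 ^ (2 * n + 2) *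
    (PI ^ 2 / 2 - sumR 1 n (fun k => 2 ^ (2 * k) / (INR k ^ 2 * cbin k))).
Proof.
  induction n as [|n IH].
  - change (2 * 0)%nat with 0%nat. rewrite I_0, cbin_0.
    unfold sumR; simpl; field.
  - replace (I (2 * S n)) with (I (S (S (2 * n)))) by (f_equal; lia).
    rewrite I_SS, IH, sumR_S, cbin_S by lia.
    replace (2 * S n + 2)%nat with (2 * n + 2 + 2)%nat by lia.
    replace (2 * S n)%nat with (2 * n + 2)%nat by lia.
    rewrite !pow_add, !S_INR, mult_INR.
    pose proof (cbin_pos n). pose proof (pos_INR n).
    assert (0 < 2 ^ (2 * n)) by (apply pow_lt; lra).
    simpl (INR 2). field. repeat split; lra.
Qed.

Lemma I_odd n : I (2 * n + 1) =
  2 ^ (2 * n) / (INR (2 * n + 1) * cbin n) *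
    (PI / 2 - sumR 0 n (fun k => cbin k / (2 ^ (2 * k) * INR (2 * k + 1)))).
Proof.
  induction n as [|n IH].
  - change (2 * 0 + 1)%nat with 1%nat. rewrite I_1.
    unfold sumR; simpl; rewrite cbin_0; field.
  - replace (I (2 * S n + 1)) with (I (S (S (2 * n + 1)))) by (f_equal; lia).
    rewrite I_SS, IH, sumR_S, cbin_S by lia.
    replace (2 * S n)%nat with (2 * n + 2)%nat by lia.
    replace (2 * n + 2 + 1)%nat with (S (S (2 * n + 1))) by lia.
    rewrite !pow_add, !S_INR, !plus_INR, mult_INR.
    pose proof (cbin_pos n). pose proof (pos_INR n).
    assert (0 < 2 ^ (2 * n)) by (apply pow_lt; lra).
    simpl (INR 2); simpl (INR 1). field. repeat split; lra.
Qed.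

Theorem theorem2p6 (n : nat) :
  (exists pr : Riemann_integrable (fun x => x * cos x ^ (2 * n)) 0 (PI / 2),
     RiemannInt pr =
       cbin n / 2 ^ (2 * n + 2) *
       (PI ^ 2 / 2 - sumR 1 n (fun k => 2 ^ (2 * k) / (INR k ^ 2 * cbin k))))
  /\
  (exists pr : Riemann_integrable (fun x => x * cos x ^ (2 * n + 1)) 0 (PI / 2),
     RiemannInt pr =
       2 ^ (2 * n) / (INR (2 * n + 1) * cbin n) *
       (PI / 2 - sumR 0 n (fun k => cbin k / (2 ^ (2 * k) * INR (2 * k + 1))))).
Proof.
  split.
  - destruct (I_integral (2 * n)) as [pr Hpr].
    exists pr; rewrite Hpr; apply I_even.
  - destruct (I_integral (2 * n + 1)) as [pr Hpr].
    exists pr; rewrite Hpr; apply I_odd.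
Qed.
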